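(* Let $S$ be a set and $s:I_m\to S$ a non-constant sequence. Let $A=s(1)$, let $m_1\ge 1$ be maximal with $s(1)=\cdots=s(m_1)=A$, let $m_2\ge 0$ be maximal with $s(m)=s(m-1)=\cdots=s(m-m_2+1)=A$, and put $m'=m_1+m_2$ (so $m'<m$). If $\sigma\in\mathscr{T}_m$ satisfies $$\{\sigma^{-1}(m),\sigma^{-1}(m-1),\ldots,\sigma^{-1}(m-m'+1)\}=\{1,2,\ldots,m_1\}\cup\{m,m-1,\ldots,m-m_2+1\},$$ then there exists $\tau\in\mathscr{T}_{m-m'}\circ\tau_{m-m_2}$ such that $\sigma s=\tau s$.
   Context: $\mathcal{S}_m$ is the group of bijections of $I_m=\{1,\ldots,m\}$, with $\sigma\circ\tau$ meaning apply $\tau$ first. $\mathscr{T}_m=\{\sigma\in\mathcal{S}_m \mid \exists t\in I_m:\ \sigma(1)>\sigma(2)>\cdots>\sigma(t)=1,\ \sigma(t)<\sigma(t+1)<\cdots<\sigma(m)\}$; for $k\le m$, $\mathscr{T}_k$ is identified with the permutations in $\mathcal{S}_m$ fixing all symbols $>k$ whose restriction to $I_k$ lies in $\mathscr{T}_k$. For $i\in I_m$, $\tau_i(j)=i+1-j$ for $j\le i$ and $\tau_i(j)=j$ for $j>i$. $\mathscr{T}_{k}\circ\tau_{i}=\{\rho\circ\tau_i\mid\rho\in\mathscr{T}_k\}$. $\mathcal{S}_m$ acts on sequences $s:I_m\to S$ by $\sigma s=s\circ\sigma^{-1}$. *)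

(* Indices are 0-based: the paper's symbol j in I_m = {1..m}
   corresponds to the ordinal j-1 : 'I_m. *)
From mathcomp Require Import all_boot all_order all_fingroup.
Set Implicit Arguments. Unset Strict Implicit. Unset Printing Implicit Defensive.

(* membership in script-T_k, viewed inside S_m: sigma fixes every (0-based)
   symbol >= k, and on {0..k-1} it is decreasing down to the value 0 at
   position t and increasing afterwards. *)
Definition inT (m k : nat) (sigma : {perm 'I_m}) : Prop :=
  (forall j : 'I_m, k <= j -> sigma j = j) /\
  exists t : 'I_m, [/\ t < k, val (sigma t) = 0,
    (forall i j : 'I_m, i < j -> j <= t -> sigma j < sigma i) &
    (forall i j : 'I_m, t <= i -> i < j -> j < k -> sigma i < sigma j)].

(* tau_i (1-based): j |-> i+1-j for j <= i, j otherwise.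
   0-based: j |-> i-1-j for j < i, j otherwise (i is capped at m). *)
Definition tau_fun (m i : nat) (j : 'I_m) : 'I_m :=
  if j < minn i m then insubd j ((minn i m).-1 - j) else j.

Lemma tau_fun_val (m i : nat) (j : 'I_m) :
  val (tau_fun i j) = if j < minn i m then (minn i m).-1 - j else val j.
Proof.
rewrite /tau_fun; case: ifP => // hj; rewrite val_insubd.
have -> // : (minn i m).-1 - j < m.
apply: leq_ltn_trans (leq_subr _ _) _.
have hm : minn i m <= m by exact: geq_minr.
have hp : 0 < minn i m by exact: leq_ltn_trans (leq0n j) hj.
by rewrite prednK // (leq_trans _ hm) // -{2}(prednK hp).
Qed.

Lemma tau_funK (m i : nat) : involutive (@tau_fun m i).
Proof.
move=> j; apply: val_inj; rewrite tau_fun_val.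
have e := tau_fun_val i j; rewrite /= in e *; rewrite e.
case hj: (j < minn i m); first last.
  by rewrite hj.
have hp : 0 < minn i m by exact: leq_ltn_trans (leq0n j) hj.
have -> : (minn i m).-1 - j < minn i m.
  by rewrite (leq_ltn_trans (leq_subr _ _)) // prednK.
by rewrite subKn // -ltnS prednK.
Qed.

Definition tau_perm (m i : nat) : {perm 'I_m} :=
  perm (can_inj (@tau_funK m i)).

From mathcomp Require Import all_boot all_order all_fingroup.
From mathcomp Require Import zify.

Set Implicit Arguments.
Unset Strict Implicit.
Unset Printing Implicit Defensive.

(* Since [sigma] sends the middle block [m1 <= p < m - m2] onto [0, n), where
   n = m - (m1 + m2), and the end blocks (on which [s] is constantly [A]) onto
   [n, m), only the values of [sigma] on the middle block matter for
   [sigma s]. Reflecting the middle block with [tau_(m - m2)] moves it onto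
   [0, n), so [sigma] restricted to it becomes a permutation [rho] of [0, n);
   [rho] is a valley permutation again, since the reflection only swaps its
   decreasing and increasing runs, and [tau_(m - m2) * rho] agrees with
   [sigma] on the middle block. *)

Lemma eq_comp_invperm (aT : finType) (rT : Type) (s : aT -> rT) (a : rT)
    (M : {pred aT}) (sigma tau : {perm aT}) :
  {in M, sigma =1 tau} -> (forall p, p \notin M -> s p = a) ->
  forall x, s ((sigma^-1)%g x) = s ((tau^-1)%g x).
Proof.
move=> eq_st s_out x; set p := (sigma^-1)%g x.
have [pM | pNM] := boolP (p \in M).
  by rewrite -(permK tau p) -eq_st // permKV.
set q := (tau^-1)%g x; rewrite s_out //.
have [qM | qNM] := boolP (q \in M); last by rewrite s_out.
have sq : sigma q = x by rewrite eq_st // permKV.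
by move: pNM; rewrite /p -sq permK qM.
Qed.

Lemma imset_invperm_eq (aT : finType) (sigma : {perm aT}) (P Q : pred aT) :
  [set (sigma^-1)%g k | k : aT & P k] = [set j | Q j] ->
  forall p, P (sigma p) = Q p.
Proof.
move/setP=> eqPQ p; move: (eqPQ p); rewrite [in RHS]inE => <-.
apply/idP/imsetP => [Psp | [k]]; first by exists (sigma p); rewrite ?inE ?permK.
by rewrite inE => Pk ->; rewrite permKV.
Qed.

Lemma tau_permK (m i : nat) : involutive (tau_perm m i).
Proof. by move=> j; rewrite !permE tau_funK. Qed.

Lemma tau_perm_lt (m i : nat) (j : 'I_m) :
  i <= m -> j < i -> tau_perm m i j = i.-1 - j :> nat.
Proof. by move=> im ji; rewrite permE tau_fun_val (minn_idPl im) ji. Qed.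

Lemma tau_perm_ge (m i : nat) (j : 'I_m) : i <= j -> tau_perm m i j = j.
Proof.
move=> ij; apply: val_inj; rewrite permE tau_fun_val ifF //.
by apply/negbTE; rewrite -leqNgt (leq_trans (geq_minl _ _)).
Qed.

Section MiddleBlock.

Variables (m m1 m2 : nat) (sigma : {perm 'I_m}).
Let n := m - (m1 + m2).
Let refl := tau_perm m (m - m2).

Hypothesis n_gt0 : 0 < n.
Hypothesis sigma_lt_n : forall p : 'I_m, (sigma p < n) = (m1 <= p < m - m2).

Lemma refl_lt (y : 'I_m) : y < m - m2 -> refl y = (m - m2).-1 - y :> nat.
Proof. exact/tau_perm_lt/leq_subr. Qed.

Lemma refl_mid (y : 'I_m) : (m1 <= refl y < m - m2) = (y < n).
Proof.
have [ym2 | m2y] := ltnP y (m - m2); first by rewrite refl_lt //; lia.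
by rewrite tau_perm_ge //; lia.
Qed.

Definition middle_perm : {perm 'I_m} :=
  restr_perm [set y : 'I_m | y < n] (refl * sigma)%g.

Lemma middle_perm_stable :
  (refl * sigma)%g \in ('N([set y : 'I_m | y < n] | 'P))%g.
Proof.
by apply/astabsP => y; rewrite /= /aperm permM !inE sigma_lt_n refl_mid.
Qed.

Lemma middle_permE (y : 'I_m) : y < n -> middle_perm y = sigma (refl y).
Proof.
by move=> yn; rewrite restr_permE ?middle_perm_stable ?inE // permM.
Qed.

Lemma middle_perm_out (y : 'I_m) : n <= y -> middle_perm y = y.
Proof. by move=> ny; rewrite (out_perm (restr_perm_on _ _)) // inE -leqNgt. Qed.

Lemma refl_middle_perm (p : 'I_m) :
  m1 <= p < m - m2 -> (refl * middle_perm)%g p = sigma p.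
Proof.
move=> pmid; have refl_p_n : refl p < n by rewrite -refl_mid tau_permK.
by rewrite permM middle_permE // tau_permK.
Qed.

(* The reflection reverses positions, so the decreasing run of [sigma] up to
   its valley [t] becomes the increasing run of [middle_perm] from [refl t]
   and vice versa. *)
Lemma middle_perm_inT : inT m sigma -> inT n middle_perm.
Proof.
case=> _ [t [_ sigma_t dec inc]]; split=> [y /middle_perm_out // | ].
have tmid : m1 <= t < m - m2 by rewrite -sigma_lt_n sigma_t; lia.
have tm2 : t < m - m2 by case/andP: tmid.
have refl_t := refl_lt tm2.
exists (refl t); split.
- by rewrite -refl_mid tau_permK.
- by rewrite middle_permE -?refl_mid tau_permK // ?sigma_t ?tmid.
- move=> i j ij jt; rewrite !middle_permE; try lia.
  by apply: inc; rewrite ?refl_lt; lia.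
- move=> i j ti ij jn; rewrite !middle_permE; try lia.
  by apply: dec; rewrite ?refl_lt; lia.
Qed.

End MiddleBlock.

Theorem mainTheorem12 (T : Type) (m : nat) (s : 'I_m -> T)
  (hnc : exists i j : 'I_m, s i <> s j)
  (A : T) (hA : forall j : 'I_m, val j = 0 -> s j = A)
  (m1 m2 : nat)
  (hm1 : 1 <= m1 <= m)
  (hm1A : forall j : 'I_m, j < m1 -> s j = A)
  (hm1max : forall j : 'I_m, val j = m1 -> s j <> A)
  (hm2 : m2 <= m)
  (hm2A : forall j : 'I_m, m - m2 <= j -> s j = A)
  (hm2max : forall j : 'I_m, (val j).+1 = m - m2 -> s j <> A)
  (sigma : {perm 'I_m}) (hsigma : inT m sigma)
  (hset : [set (sigma^-1)%g k | k : 'I_m & m - (m1 + m2) <= k]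
          = [set j : 'I_m | (j < m1) || (m - m2 <= j)]) :
  exists tau : {perm 'I_m},
    (exists rho : {perm 'I_m},
       inT (m - (m1 + m2)) rho /\ tau = (tau_perm m (m - m2) * rho)%g) /\
    (forall x : 'I_m, s ((sigma^-1)%g x) = s ((tau^-1)%g x)).
Proof.
have sigma_lt_n p : (sigma p < m - (m1 + m2)) = (m1 <= p < m - m2).
  by rewrite ltnNge (imset_invperm_eq hset p) negb_or -leqNgt -ltnNge.
have s_end (p : 'I_m) : (p < m1) || (m - m2 <= p) -> s p = A.
  by case/orP=> [/hm1A | /hm2A].
have n_gt0 : 0 < m - (m1 + m2).
  case: hnc => i [j]; apply: contra_notT; rewrite -leqNgt leqn0 => /eqP n0.
  by rewrite !s_end //; lia.
pose rho := middle_perm m1 m2 sigma.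
exists (tau_perm m (m - m2) * rho)%g; split.
  by exists rho; split; first exact: middle_perm_inT.
apply: (eq_comp_invperm (M := [pred p : 'I_m | m1 <= p < m - m2]) (a := A)).
  by move=> p pmid; rewrite refl_middle_perm.
by move=> p; rewrite inE negb_and -leqNgt -ltnNge; apply: s_end.
Qed.
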